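(* Let $S\subset\mathbb{R}^n_+$ be compact and convex with $0\in S$ and $\overline{S\cap\mathbb{Q}^n}=S$. Let $f=(f_1,\dots,f_n)\colon\mathbb{C}^\ell\to\mathbb{C}^n$ be a polynomial map with no $f_j$ identically zero, write $f_j(z)=\sum_{\alpha\in\mathbb{N}^\ell}a_{j,\alpha}z^\alpha$, let $I_j=\{\alpha\in\mathbb{N}^\ell\,;\,a_{j,\alpha}\neq0\}$, let $S_j\subset\mathbb{R}^\ell_+$ be the convex hull of $I_j$, and let $S'=\bigcup_{x\in S}(x_1S_1+\cdots+x_nS_n)\subset\mathbb{R}^\ell_+$. Then $S'$ is the smallest compact convex subset $T$ of $\mathbb{R}^\ell_+$ with $0\in T$ for which $f^*\big(\mathcal{P}^S_m(\mathbb{C}^n)\big)\subseteq\mathcal{P}^T_m(\mathbb{C}^\ell)$ for all $m\in\mathbb{N}$.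
   Context: $\mathbb{R}_+=[0,\infty)$, $\mathbb{N}=\{0,1,2,\dots\}$. For a subset $T\subset\mathbb{R}^k_+$ and $m\in\mathbb{N}$, $\mathcal{P}^T_m(\mathbb{C}^k)$ is the space of polynomials $\sum_{\alpha\in(mT)\cap\mathbb{N}^k}a_\alpha z^\alpha$. $f^*p=p\circ f$. Minkowski sums and scalar multiples: $x_jS_j=\{x_js\,;\,s\in S_j\}$. *)

From HB Require Import structures.
From mathcomp Require Import all_boot all_order all_algebra.
From mathcomp Require Import mpoly.
From mathcomp Require Import all_classical all_reals all_analysis.
From mathcomp Require complex.
Import complex.ComplexField.
Import numFieldNormedType.Exports.
Set Implicit Arguments. Unset Strict Implicit. Unset Printing Implicit Defensive.
Import Order.TTheory GRing.Theory Num.Theory.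
Local Open Scope ring_scope.
Local Open Scope classical_set_scope.

Notation cplx R := (complex.complex R).

Notation cpoly R k := (mpoly.mpoly k (cplx R)).

Definition orthant (R : realType) (k : nat) : set 'rV[R]_k :=
  [set x | forall i, 0 <= x ord0 i].

Definition convex_set_rV (R : realType) (k : nat) (A : set 'rV[R]_k) : Prop :=
  forall x y t, A x -> A y -> 0 <= t -> t <= 1 -> A (t *: x + (1 - t) *: y).

Definition conv_hull (R : realType) (k : nat) (A : set 'rV[R]_k) : set 'rV[R]_k :=
  [set x | exists (N : nat) (w : 'I_N -> R) (p : 'I_N -> 'rV[R]_k),
     [/\ forall i, A (p i), forall i, 0 <= w i, \sum_(i < N) w i = 1
       & x = \sum_(i < N) w i *: p i]].

Definition is_rat (R : realType) (r : R) : Prop := exists q : rat, r = ratr q.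

Definition rat_points (R : realType) (k : nat) : set 'rV[R]_k :=
  [set x | forall i, is_rat (x ord0 i)].

Definition mnm_pt (R : realType) (k : nat) (a : mpoly.multinom k) : 'rV[R]_k :=
  \row_i ((mpoly.fun_of_multinom a i)%:R : R).

Definition supp_pts (R : realType) (k : nat) (p : cpoly R k) : set 'rV[R]_k :=
  [set mnm_pt R a | a in [set a : mpoly.multinom k | a \in mpoly.msupp p]].

(* P^T_m(C^k): polynomials whose exponents all lie in (m T) ∩ N^k *)
Definition PT (R : realType) (k : nat) (T : set 'rV[R]_k) (m : nat) : set (cpoly R k) :=
  [set p | forall a : mpoly.multinom k, a \in mpoly.msupp p -> exists2 t, T t & mnm_pt R a = m%:R *: t].

Definition pullback (R : realType) (n l : nat) (f : n.-tuple (cpoly R l)) (p : cpoly R n)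
  : cpoly R l := mpoly.comp_mpoly f p.

Definition S_prime (R : realType) (n l : nat) (S : set 'rV[R]_n)
    (f : n.-tuple (cpoly R l)) : set 'rV[R]_l :=
  [set y | exists2 x, S x & exists s : 'I_n -> 'rV[R]_l,
     (forall j, conv_hull (supp_pts (tnth f j)) (s j)) /\
     y = \sum_(j < n) x ord0 j *: s j].

Definition admissible (R : realType) (n l : nat) (S : set 'rV[R]_n)
    (f : n.-tuple (cpoly R l)) (T : set 'rV[R]_l) : Prop :=
  [/\ compact T, convex_set_rV T, T `<=` @orthant R l, T 0
    & forall (m : nat) (p : cpoly R n), PT S m p -> PT T m (pullback f p)].

(* The exponents of f^*(z^K) = \prod_j f_j^(K_j) lie in \sum_j K_j S_j, which makes S'
   admissible; S' is compact as a continuous image of S times a product of simplices, and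
   convex because the coefficients x_j are nonnegative.

   For minimality, the maximum of a linear form w over the support of a product of
   polynomials is the sum of the maxima over the factors, because the top-weight parts of
   the factors multiply to a nonzero polynomial.  Let T be admissible and suppose
   y = \sum_j x_j s_j is not in T for a rational x in S.  Pick m with K = m x in N^n and a
   linear form w with w.t < w.y on T.  The monomial z^K lies in P^S_m, and its pullback has
   an exponent g with w.g >= m w.y, whereas g in mT forces w.g < m w.y.  Rational points
   are dense in S and T is closed, hence S' is contained in T. *)

From HB Require Import structures.
From mathcomp Require Import all_boot all_order all_algebra.
From mathcomp Require Import mpoly.
From mathcomp Require Import all_classical all_reals all_analysis.
From mathcomp Require complex.
From mathcomp Require Import ring lra.
Import complex.ComplexField.
Import numFieldNormedType.Exports.
Set Implicit Arguments. Unset Strict Implicit. Unset Printing Implicit Defensive.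
Import Order.TTheory GRing.Theory Num.Theory.
Local Open Scope ring_scope.
Local Open Scope classical_set_scope.

Section DotProduct.
Variables (R : comPzRingType) (k : nat).
Implicit Types u v w : 'rV[R]_k.

Definition dotp u v : R := \sum_i u ord0 i * v ord0 i.

Lemma dotpD w u v : dotp w (u + v) = dotp w u + dotp w v.
Proof. by rewrite /dotp -big_split; apply: eq_bigr => i _; rewrite mxE mulrDr. Qed.

Lemma dotpB w u v : dotp w (u - v) = dotp w u - dotp w v.
Proof. by rewrite /dotp -sumrB; apply: eq_bigr => i _; rewrite !mxE mulrBr. Qed.

Lemma dotpZ w c v : dotp w (c *: v) = c * dotp w v.
Proof. by rewrite /dotp mulr_sumr; apply: eq_bigr => i _; rewrite mxE mulrCA. Qed.

Lemma dotp0 w : dotp w 0 = 0.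
Proof. by rewrite /dotp big1 // => i _; rewrite mxE mulr0. Qed.

Lemma dotp_sum w (I : Type) (r : seq I) (P : pred I) (F : I -> 'rV[R]_k) :
  dotp w (\sum_(i <- r | P i) F i) = \sum_(i <- r | P i) dotp w (F i).
Proof. exact: (big_morph (dotp w) (dotpD w) (dotp0 w)). Qed.

Lemma dotp_subZ w u e :
  dotp (w - e *: u) (w - e *: u) = dotp w w - 2 * e * dotp w u + e ^+ 2 * dotp u u.
Proof.
rewrite /dotp !mulr_sumr -sumrB -big_split; apply: eq_bigr => i _; rewrite !mxE /=.
ring.
Qed.

End DotProduct.

Lemma dotpp_ge0 (R : realDomainType) k (u : 'rV[R]_k) : 0 <= dotp u u.
Proof. by apply: sumr_ge0 => i _; rewrite -expr2 sqr_ge0. Qed.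

Lemma dotpp_gt0 (R : realDomainType) k (u : 'rV[R]_k) : u != 0 -> 0 < dotp u u.
Proof.
move=> u_neq0; rewrite lt_def dotpp_ge0 andbT; apply: contraNN u_neq0 => /eqP u0.
apply/eqP/rowP => i; rewrite mxE; apply/eqP; rewrite -sqrf_eq0 expr2.
by apply/eqP/(psumr_eq0P _ u0) => // j _; rewrite -expr2 sqr_ge0.
Qed.

Lemma seq_argmax d (T : eqType) (O : orderType d) (F : T -> O) (s : seq T) :
  s != [::] -> exists2 a, a \in s & {in s, forall b, (F b <= F a)%O}.
Proof.
elim: s => // x s IH _.
have [->|/IH [a a_in a_max]] := eqVneq s [::].
  by exists x; rewrite ?mem_head // => b; rewrite inE => /eqP ->.
have [xa|ax] := leP (F x) (F a).
  exists a; first by rewrite inE a_in orbT.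
  by move=> b; rewrite inE => /orP [/eqP ->|/a_max].
exists x; first exact: mem_head.
by move=> b; rewrite inE => /orP [/eqP ->//|/a_max ba]; apply: le_trans ba (ltW ax).
Qed.

Lemma msupp_exists (R : nzRingType) k (p : {mpoly R[k]}) :
  p != 0 -> exists a, a \in msupp p.
Proof.
by rewrite -msupp_eq0; case: (msupp p) => // a s _; exists a; rewrite mem_head.
Qed.

Lemma msupp_prod_decomp (R : comNzRingType) k (I : eqType) (r : seq I)
    (F : I -> {mpoly R[k]}) a :
  uniq r -> a \in msupp (\prod_(i <- r) F i) ->
  exists2 b : I -> 'X_{1..k}, {in r, forall i, b i \in msupp (F i)} &
    a = \big[+%MM/0%MM]_(i <- r) b i.
Proof.
elim: r a => [|x r IH] a.
  by rewrite big_nil msupp1 inE => _ /eqP ->; exists (fun=> 0%MM); rewrite ?big_nil.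
rewrite /= big_cons => /andP [x_r r_uniq].
move=> /msuppM_le /allpairsP [[a1 a2] /= [a1_in /(IH _ r_uniq) [b b_in ->] ->]].
exists (fun i => if i == x then a1 else b i).
  by move=> i; rewrite inE; case: eqP => [->//|_ /= /b_in].
rewrite big_cons eqxx; congr (_ + _)%MM; apply: eq_big_seq => i i_r.
by case: eqP => // ix; rewrite -ix i_r in x_r.
Qed.

Section MonomialWeight.
Variables (R : realType) (C : idomainType) (l : nat).
Implicit Types (p q : {mpoly C[l]}) (w : 'rV[R]_l) (a b : 'X_{1..l}).

Lemma mnm_ptD a b : mnm_pt R (a + b)%MM = mnm_pt R a + mnm_pt R b.
Proof. by apply/rowP => i; rewrite !mxE mnmDE natrD. Qed.

Lemma mnm_pt0 : mnm_pt R (0%MM : 'X_{1..l}) = 0.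
Proof. by apply/rowP => i; rewrite !mxE mnm0E. Qed.

Lemma mnm_pt_sum (I : Type) (r : seq I) (F : I -> 'X_{1..l}) :
  mnm_pt R (\big[+%MM/0%MM]_(i <- r) F i) = \sum_(i <- r) mnm_pt R (F i).
Proof.
by apply: (big_morph (fun a : 'X_{1..l} => mnm_pt R a)); [exact: mnm_ptD | exact: mnm_pt0].
Qed.

Definition mweight w a := dotp w (mnm_pt R a).

Lemma mweightD w a b : mweight w (a + b)%MM = mweight w a + mweight w b.
Proof. by rewrite /mweight mnm_ptD dotpD. Qed.

Lemma mweight0 w : mweight w 0%MM = 0.
Proof. by rewrite /mweight mnm_pt0 dotp0. Qed.

Definition msupp_max w p v := exists2 a, a \in msupp p &
  mweight w a = v /\ {in msupp p, forall b, mweight w b <= v}.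

Lemma msupp_max_le w p v : msupp_max w p v -> {in msupp p, forall b, mweight w b <= v}.
Proof. by case=> a _ []. Qed.

Lemma msupp_max_exists w p : p != 0 -> exists v, msupp_max w p v.
Proof.
rewrite -msupp_eq0 => /(seq_argmax (mweight w)) [a a_in a_max].
by exists (mweight w a); exists a.
Qed.

Lemma mweight_msuppM_le w p q u v :
  {in msupp p, forall a, mweight w a <= u} -> {in msupp q, forall b, mweight w b <= v} ->
  {in msupp (p * q), forall c, mweight w c <= u + v}.
Proof.
move=> p_le q_le c /msuppM_le /allpairsP [[a b] /= [a_in b_in ->]].
by rewrite mweightD lerD ?p_le ?q_le.
Qed.

Lemma mweight_msuppM_lt w p q u v :
  {in msupp p, forall a, mweight w a <= u} -> {in msupp q, forall b, mweight w b < v} ->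
  {in msupp (p * q), forall c, mweight w c < u + v}.
Proof.
move=> p_le q_lt c /msuppM_le /allpairsP [[a b] /= [a_in b_in ->]].
by rewrite mweightD ler_ltD ?p_le ?q_lt.
Qed.

Lemma msuppD_lt w p q a : a \in msupp p ->
  {in msupp q, forall b, mweight w b < mweight w a} -> a \in msupp (p + q).
Proof.
move=> a_in q_lt.
have qa0 : q@_a = 0 by apply: memN_msupp_eq0; apply/negP => /q_lt; rewrite ltxx.
by rewrite mcoeff_msupp mcoeffD qa0 addr0 -mcoeff_msupp.
Qed.

Lemma msupp_max_decomp w p v : msupp_max w p v -> exists p1 p2, [/\ p = p1 + p2,
  p1 != 0, {in msupp p1, forall a, mweight w a = v} &
  {in msupp p2, forall a, mweight w a < v}].
Proof.
move=> [a a_in [a_top p_le]].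
have msupp_filter (P : pred 'X_{1..l}) b :
    b \in msupp (\sum_(c <- msupp p | P c) p@_c *: 'X_[c]) -> b \in msupp p /\ P b.
  move=> /msupp_sum_le /flattenP [s /mapP [c]]; rewrite mem_filter => /andP [Pc c_in] ->.
  by move=> /msuppZ_le; rewrite msuppX inE => /eqP ->.
pose P c := mweight w c == v.
pose p1 := \sum_(c <- msupp p | P c) p@_c *: 'X_[c].
pose p2 := \sum_(c <- msupp p | ~~ P c) p@_c *: 'X_[c].
have pE : p = p1 + p2 by rewrite {1}(mpolyE p) (bigID P).
exists p1, p2; split => //.
- apply: contraTneq a_in => p1_0; rewrite pE p1_0 add0r.
  by apply/negP => /msupp_filter [_]; rewrite /P a_top eqxx.
- by move=> b /msupp_filter [_ /eqP].
- by move=> b /msupp_filter [b_in Pb]; rewrite lt_neqAle Pb p_le.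
Qed.

Lemma msupp_maxM w p q u v :
  msupp_max w p u -> msupp_max w q v -> msupp_max w (p * q) (u + v).
Proof.
move=> p_max q_max.
have pq_le := mweight_msuppM_le (msupp_max_le p_max) (msupp_max_le q_max).
have [p1 [p2 [pE p1_neq0 p1_top p2_lt]]] := msupp_max_decomp p_max.
have [q1 [q2 [qE q1_neq0 q1_top q2_lt]]] := msupp_max_decomp q_max.
have p1_le : {in msupp p1, forall a, mweight w a <= u} by move=> a /p1_top ->.
have q1_le : {in msupp q1, forall a, mweight w a <= v} by move=> a /q1_top ->.
have p2_le : {in msupp p2, forall a, mweight w a <= u} by move=> a /p2_lt /ltW.
have [g g_in] := msupp_exists (mulf_neq0 p1_neq0 q1_neq0).
have g_top : mweight w g = u + v.
  move: g_in => /msuppM_le /allpairsP [[a b] /= [a_in b_in ->]].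
  by rewrite mweightD p1_top ?q1_top.
have pqE : p * q = p1 * q1 + (p1 * q2 + q1 * p2 + p2 * q2) by rewrite pE qE; ring.
exists g; last by split.
rewrite pqE; apply: (msuppD_lt (w := w)) => // c; rewrite g_top.
move=> /msuppD_le; rewrite mem_cat => /orP [/msuppD_le|]; last exact: mweight_msuppM_lt.
rewrite mem_cat => /orP [|]; first exact: mweight_msuppM_lt.
by rewrite addrC; apply: mweight_msuppM_lt.
Qed.

Lemma msupp_max1 w : msupp_max w 1 0.
Proof.
exists 0%MM; rewrite msupp1 ?mem_head //; split; first exact: mweight0.
by move=> b; rewrite inE => /eqP ->; rewrite mweight0.
Qed.

Lemma msupp_maxX w p v k : msupp_max w p v -> msupp_max w (p ^+ k) (k%:R * v).
Proof.
move=> p_max; elim: k => [|k IH]; first by rewrite expr0 mul0r; apply: msupp_max1.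
by rewrite exprS -addn1 natrD mulrDl mul1r addrC; apply: msupp_maxM.
Qed.

Lemma msupp_max_prod w (I : Type) (r : seq I) (P : pred I) (F : I -> {mpoly C[l]}) U :
  (forall i, P i -> msupp_max w (F i) (U i)) ->
  msupp_max w (\prod_(i <- r | P i) F i) (\sum_(i <- r | P i) U i).
Proof.
by apply: (big_ind2 (msupp_max w)); [apply: msupp_max1 | move=> *; apply: msupp_maxM].
Qed.

End MonomialWeight.

Lemma regroup_combination (R : numDomainType) (V : lmodType R) N (A : 'I_N -> V)
    M (w : 'I_M -> R) (p : 'I_M -> V) :
  (forall i, exists k, p i = A k) -> (forall i, 0 <= w i) ->
  exists W : 'I_N -> R, [/\ forall k, 0 <= W k, \sum_k W k = \sum_i w i &
     \sum_k W k *: A k = \sum_i w i *: p i].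
Proof.
elim: M w p => [|M IH] w p p_A w_ge0.
  exists (fun=> 0); split => //; rewrite ?big_ord0 big1 // => k _; exact: scale0r.
have [W [W_ge0 W_sum W_comb]] := IH (fun i => w (widen_ord (leqnSn M) i))
   (fun i => p (widen_ord (leqnSn M) i)) (fun i => p_A _) (fun i => w_ge0 _).
have [k0 pk0] := p_A ord_max.
exists (fun k => W k + (k == k0)%:R * w ord_max); split.
- by move=> k; rewrite addr_ge0 ?mulr_ge0 ?ler0n.
- rewrite big_split /= big_ord_recr /= W_sum; congr (_ + _).
  by rewrite (bigD1 k0) //= eqxx mul1r big1 ?addr0 // => k /negbTE ->; rewrite mul0r.
- under eq_bigr do rewrite scalerDl.
  rewrite big_split /= big_ord_recr /= W_comb; congr (_ + _).
  rewrite (bigD1 k0) //= eqxx mul1r big1 ?addr0 ?pk0 // => k /negbTE ->.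
  by rewrite mul0r scale0r.
Qed.

Lemma convex_comb_regroup (R : realFieldType) (V : lmodType R) (a b : R) (u v : V) :
  0 <= a -> 0 <= b ->
  exists2 t, 0 <= t <= 1 & a *: u + b *: v = (a + b) *: (t *: u + (1 - t) *: v).
Proof.
move=> a_ge0 b_ge0; have [ab0|ab_neq0] := eqVneq (a + b) 0.
  move: ab0 => /eqP; rewrite paddr_eq0 // => /andP [/eqP -> /eqP ->].
  by exists 0; rewrite ?lexx ?ler01 // !(add0r, scale0r).
have ab_gt0 : 0 < a + b by rewrite lt_def ab_neq0 addr_ge0.
exists (a / (a + b)).
  by rewrite divr_ge0 ?addr_ge0 //= ler_pdivrMr // mul1r lerDl.
rewrite scalerDr !scalerA mulrBr mulr1 mulrCA mulfV // mulr1.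
by rewrite [a + b - a]addrC addKr.
Qed.

Section ConvexHull.
Variables (R : realType) (k : nat).
Implicit Types (A : set 'rV[R]_k).

Lemma sub_conv_hull A : A `<=` conv_hull A.
Proof.
move=> x Ax; exists 1%N, (fun=> 1), (fun=> x).
by split; rewrite // big_ord1 ?scale1r.
Qed.

Lemma conv_hull_convex A : convex_set_rV (conv_hull A).
Proof.
move=> _ _ t [N1 [w1 [p1 [Ap1 w1_ge0 w1_sum ->]]]] [N2 [w2 [p2 [Ap2 w2_ge0 w2_sum ->]]]].
move=> t_ge0 t_le1.
pose glue X (f1 : 'I_N1 -> X) (f2 : 'I_N2 -> X) (i : 'I_(N1 + N2)) :=
  match fintype.split i with inl a => f1 a | inr b => f2 b end.
have glue_l X f1 f2 (i : 'I_N1) : glue X f1 f2 (lshift N2 i) = f1 i.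
  by rewrite /glue (unsplitK (inl _ i)).
have glue_r X f1 f2 (i : 'I_N2) : glue X f1 f2 (rshift N1 i) = f2 i.
  by rewrite /glue (unsplitK (inr _ i)).
exists (N1 + N2)%N, (glue _ (fun a => t * w1 a) (fun b => (1 - t) * w2 b)), (glue _ p1 p2).
split.
- by move=> i; rewrite /glue; case: (fintype.split i).
- by move=> i; rewrite /glue; case: (fintype.split i) => a; rewrite mulr_ge0 ?subr_ge0.
- rewrite big_split_ord /=.
  under eq_bigr do rewrite glue_l.
  under [X in _ + X = _]eq_bigr do rewrite glue_r.
  by rewrite -!mulr_sumr w1_sum w2_sum !mulr1 addrC subrK.
- rewrite big_split_ord /=.
  under [X in _ = X + _]eq_bigr do rewrite !glue_l.
  under [X in _ = _ + X]eq_bigr do rewrite !glue_r.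
  by rewrite !scaler_sumr; congr (_ + _); apply: eq_bigr => i _; rewrite scalerA.
Qed.

Lemma conv_hull_dotp_le A w M :
  (forall a, A a -> dotp w a <= M) -> forall x, conv_hull A x -> dotp w x <= M.
Proof.
move=> A_le _ [N [c [p [Ap c_ge0 c_sum ->]]]].
rewrite dotp_sum -[M]mul1r -c_sum mulr_suml.
by apply: ler_sum => i _; rewrite dotpZ ler_wpM2l ?A_le.
Qed.

Lemma conv_hull_orthant A : A `<=` @orthant R k -> conv_hull A `<=` @orthant R k.
Proof.
move=> A_orth _ [N [c [p [Ap c_ge0 c_sum ->]]]] i.
rewrite summxE; apply: sumr_ge0 => j _; rewrite mxE mulr_ge0 //.
exact: A_orth (Ap j) i.
Qed.

End ConvexHull.

Section PullbackSupport.
Variables (R : realType) (l : nat).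
Implicit Types (q : cpoly R l).

Lemma supp_pts_mnm q a : a \in msupp q -> supp_pts q (mnm_pt R a).
Proof. by move=> a_in; exists a. Qed.

Lemma msuppX_conv_hull q k a : q != 0 -> a \in msupp (q ^+ k) ->
  exists2 s, conv_hull (supp_pts q) s & mnm_pt R a = k%:R *: s.
Proof.
move=> q_neq0; elim: k a => [|k IH] a.
  rewrite expr0 msupp1 inE => /eqP ->; have [b b_in] := msupp_exists q_neq0.
  by exists (mnm_pt R b); rewrite ?mnm_pt0 ?scale0r //; apply/sub_conv_hull/supp_pts_mnm.
rewrite exprS => /msuppM_le /allpairsP [[b c] /= [b_in /IH [s s_hull c_E] ->]].
have k1_gt0 : 0 < k.+1%:R :> R by rewrite ltr0n.
pose t : R := k.+1%:R^-1.
exists (t *: mnm_pt R b + (1 - t) *: s).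
  apply: conv_hull_convex => //; first exact/sub_conv_hull/supp_pts_mnm.
    by rewrite invr_ge0 ltW.
  by rewrite invf_le1 // -natr1 lerDr.
rewrite mnm_ptD c_E scalerDr !scalerA mulfV ?gt_eqF // scale1r mulrBr mulr1 mulfV ?gt_eqF //.
by rewrite -natr1 addrK.
Qed.

Lemma msupp_pullback n (f : n.-tuple (cpoly R l)) (p : cpoly R n) a :
  (forall j, tnth f j != 0) -> a \in msupp (pullback f p) ->
  exists2 K, K \in msupp p & exists2 s : 'I_n -> 'rV[R]_l,
    (forall j, conv_hull (supp_pts (tnth f j)) (s j)) &
    mnm_pt R a = \sum_j (K j)%:R *: s j.
Proof.
move=> f_neq0; rewrite /pullback comp_mpolyE => /msupp_sum_le /flattenP [sK /mapP [K]].
rewrite mem_filter => /andP [_ K_in] -> /msuppZ_le.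
move=> /(msupp_prod_decomp (index_enum_uniq _)) [b b_in ->].
exists K => //.
have /choice [s s_E] : forall j, exists s, conv_hull (supp_pts (tnth f j)) s /\
    mnm_pt R (b j) = (K j)%:R *: s.
  move=> j; have [s ? ?] := msuppX_conv_hull (f_neq0 j) (b_in j (mem_index_enum j)).
  by exists s.
exists s; first by move=> j; case: (s_E j).
by rewrite mnm_pt_sum; apply: eq_bigr => j _; case: (s_E j).
Qed.

End PullbackSupport.

Section SPrimeAdmissible.
Variables (R : realType) (n l : nat) (S : set 'rV[R]_n) (f : n.-tuple (cpoly R l)).
Hypothesis f_neq0 : forall j, tnth f j != 0.

Lemma S_prime_orthant : S `<=` @orthant R n -> S_prime S f `<=` @orthant R l.
Proof.
move=> S_orth _ [x Sx [s [s_hull ->]]] i.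
rewrite summxE; apply: sumr_ge0 => j _; rewrite mxE mulr_ge0 //; first exact: S_orth.
have supp_orth : supp_pts (tnth f j) `<=` @orthant R l.
  by move=> _ [a _ <-] i'; rewrite mxE ler0n.
exact: conv_hull_orthant supp_orth _ (s_hull j) i.
Qed.

Lemma conv_hull_supp_choice :
  exists s : 'I_n -> 'rV[R]_l, forall j, conv_hull (supp_pts (tnth f j)) (s j).
Proof.
have /choice [s s_hull] j : exists s, conv_hull (supp_pts (tnth f j)) s.
  have [a a_in] := msupp_exists (f_neq0 j).
  by exists (mnm_pt R a); apply/sub_conv_hull/supp_pts_mnm.
by exists s.
Qed.

Lemma S_prime0 : S 0 -> S_prime S f 0.
Proof.
move=> S0; have [s s_hull] := conv_hull_supp_choice.
exists 0 => //; exists s; split => //.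
by rewrite big1 // => j _; rewrite mxE scale0r.
Qed.

Lemma S_prime_convex : S `<=` @orthant R n -> convex_set_rV S -> convex_set_rV (S_prime S f).
Proof.
move=> S_orth S_convex _ _ t [x Sx [s [s_hull ->]]] [x' Sx' [s' [s'_hull ->]]] t_ge0 t_le1.
have /choice [c c_E] j : exists c, 0 <= c <= 1 /\
    (t * x ord0 j) *: s j + ((1 - t) * x' ord0 j) *: s' j =
    (t * x ord0 j + (1 - t) * x' ord0 j) *: (c *: s j + (1 - c) *: s' j).
  have b_ge0 : 0 <= (1 - t) * x' ord0 j by rewrite mulr_ge0 ?subr_ge0 ?S_orth.
  have [c ? ?] := convex_comb_regroup (s j) (s' j) (mulr_ge0 t_ge0 (S_orth _ Sx j)) b_ge0.
  by exists c.
exists (t *: x + (1 - t) *: x'); first exact: S_convex.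
exists (fun j => c j *: s j + (1 - c j) *: s' j); split.
  by move=> j; have [/andP [? ?] _] := c_E j; apply: conv_hull_convex.
rewrite !scaler_sumr -big_split; apply: eq_bigr => j _ /=.
by rewrite !scalerA !mxE; case: (c_E j) => _ ->.
Qed.

Lemma S_prime_pullback m p : PT S m p -> PT (S_prime S f) m (pullback f p).
Proof.
move=> p_PT a /(msupp_pullback f_neq0) [K K_in [s s_hull ->]].
have [x Sx x_E] := p_PT K K_in.
exists (\sum_j x ord0 j *: s j); first by exists x => //; exists s.
rewrite scaler_sumr; apply: eq_bigr => j _; rewrite scalerA.
by move/rowP: x_E => /(_ j); rewrite !mxE => ->.
Qed.

End SPrimeAdmissible.

Lemma continuous_sum (K : numFieldType) (T : topologicalType) (V : normedModType K)
    (I : Type) (r : seq I) (F : I -> T -> V) :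
  (forall i, continuous (F i)) -> continuous (fun x => \sum_(i <- r) F i x).
Proof.
move=> F_cont; elim: r => [|i r IH].
  have -> : (fun x => \sum_(i <- [::]) F i x) = cst 0 by apply/funext => x; rewrite big_nil.
  exact: cst_continuous.
have -> : (fun x => \sum_(j <- i :: r) F j x) = F i + (fun x => \sum_(j <- r) F j x).
  by apply/funext => x; rewrite big_cons.
by move=> x; apply: continuousD; [exact: F_cont | exact: IH].
Qed.

Section SPrimeCompact.
Variables (R : realType) (n l : nat) (S : set 'rV[R]_n) (f : n.-tuple (cpoly R l)).
Hypothesis f_neq0 : forall j, tnth f j != 0.

Definition supp_size := (\max_(j < n) size (msupp (tnth f j)))%N.

(* Indices past the end of the support fall back to its first exponent. *)
Definition supp_enum j (k : 'I_supp_size) : 'rV[R]_l :=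
  mnm_pt R (nth (head 0%MM (msupp (tnth f j))) (msupp (tnth f j)) k).

Definition simplices : set 'rV[R]_(n * supp_size) :=
  [set v | forall i, `[0, 1]%classic (v ord0 i)] `&`
  [set v | forall j, \sum_k v ord0 (mxvec_index j k) = 1].

Definition S_prime_param (z : 'rV[R]_n * 'rV[R]_(n * supp_size)) : 'rV[R]_l :=
  \sum_j z.1 ord0 j *: \sum_k z.2 ord0 (mxvec_index j k) *: supp_enum j k.

Lemma supp_enum_supp j k : supp_pts (tnth f j) (supp_enum j k).
Proof.
apply: supp_pts_mnm; have := f_neq0 j; rewrite -msupp_eq0.
case: (msupp _) => [//|a s] _.
have [/mem_nth -> //|/(nth_default _) ->] := ltnP k (size (a :: s)).
exact: mem_head.
Qed.

Lemma supp_enum_onto j z : supp_pts (tnth f j) z -> exists k, z = supp_enum j k.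
Proof.
move=> [a a_in <-].
have a_lt : (index a (msupp (tnth f j)) < supp_size)%N.
  by apply: leq_trans (leq_bigmax j); rewrite index_mem.
by exists (Ordinal a_lt); rewrite /supp_enum /= nth_index.
Qed.

Lemma conv_hull_supp_enum j s : conv_hull (supp_pts (tnth f j)) s ->
  exists W : 'I_supp_size -> R,
    [/\ forall k, 0 <= W k, \sum_k W k = 1 & s = \sum_k W k *: supp_enum j k].
Proof.
move=> [N [w [p [p_supp w_ge0 w_sum ->]]]].
have [W [W_ge0 W_sum W_E]] := regroup_combination (fun i => supp_enum_onto (p_supp i)) w_ge0.
by exists W; rewrite W_sum W_E.
Qed.

Lemma S_prime_param_image : S_prime S f = S_prime_param @` (S `*` simplices).
Proof.
apply/seteqP; split=> [_ [x Sx [s [s_hull ->]]]|_ [[x v] [Sx [v01 v_sum]] <-]].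
- have /choice [W W_E] := fun j => conv_hull_supp_enum (s_hull j).
  have W_le1 j k : W j k <= 1.
    case: (W_E j) => W_ge0 W_sum _; rewrite -W_sum (bigD1 k) //= lerDl.
    exact: sumr_ge0.
  exists (x, mxvec (\matrix_(j, k) W j k)).
    split=> //; split=> [i|j /=].
      case/mxvec_indexP: i => j k; rewrite mxvecE mxE /= in_itv /= W_le1 andbT.
      by case: (W_E j).
    by under eq_bigr do rewrite mxvecE mxE; case: (W_E j).
  rewrite /S_prime_param /=; apply: eq_bigr => j _; congr (_ *: _).
  by case: (W_E j) => _ _ ->; apply: eq_bigr => k _; rewrite mxvecE mxE.
- exists x => //; exists (fun j => \sum_k v ord0 (mxvec_index j k) *: supp_enum j k).
  split=> // j; exists supp_size, (fun k => v ord0 (mxvec_index j k)), (supp_enum j).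
  split=> // k; first exact: supp_enum_supp.
  by have := v01 (mxvec_index j k); rewrite /= in_itv /= => /andP [].
Qed.

Lemma simplices_compact : compact simplices.
Proof.
have sum_closed : closed
    [set v : 'rV[R]_(n * supp_size) | forall j, \sum_k v ord0 (mxvec_index j k) = 1].
  have -> : [set v : 'rV[R]_(n * supp_size) | forall j, \sum_k v ord0 (mxvec_index j k) = 1] =
      \bigcap_(j in setT) ((fun v => \sum_k v ord0 (mxvec_index j k)) @^-1` [set 1]).
    by apply/seteqP; split=> v v_sum j //=; apply: v_sum.
  apply: closed_bigI => j _; apply: preimage_closed; last exact: closed_eq.
  by move=> v _; apply: continuous_sum => k; apply: coord_continuous.
apply: compact_closedI sum_closed.
exact: (@rV_compact R _ (fun=> `[0, 1]%classic) (fun=> @segment_compact R 0 1)).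
Qed.

Lemma S_prime_param_continuous : continuous S_prime_param.
Proof.
have coord1 j : continuous (fun z : 'rV[R]_n * 'rV[R]_(n * supp_size) => z.1 ord0 j).
  move=> z; apply: (continuous_comp (f := fst) (g := fun M : 'rV[R]_n => M ord0 j)).
    exact: cvg_fst.
  exact: coord_continuous.
have coord2 i : continuous (fun z : 'rV[R]_n * 'rV[R]_(n * supp_size) => z.2 ord0 i).
  move=> z; apply: (continuous_comp (f := snd)
    (g := fun M : 'rV[R]_(n * supp_size) => M ord0 i)).
    exact: cvg_snd.
  exact: coord_continuous.
apply: continuous_sum => j z; apply: continuousZ; first exact: coord1.
apply: (continuous_sum (F := fun k z => _ *: _)) => k {}z.
by apply: continuousZ; [exact: coord2 | exact: cst_continuous].
Qed.

Lemma S_prime_compact : compact S -> compact (S_prime S f).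
Proof.
move=> S_compact; rewrite S_prime_param_image.
apply: continuous_compact; first exact: continuous_subspaceT S_prime_param_continuous.
exact: compact_setX S_compact simplices_compact.
Qed.

End SPrimeCompact.

Section Separation.
Variables (R : realType) (k : nat).
Implicit Types (T : set 'rV[R]_k) (c t w y : 'rV[R]_k).

Lemma continuous_dotp (U : topologicalType) (g h : U -> 'rV[R]_k) :
  continuous g -> continuous h -> continuous (fun z => dotp (g z) (h z)).
Proof.
move=> g_cont h_cont.
have coord_cont (F : U -> 'rV[R]_k) i : continuous F -> continuous (fun z => F z ord0 i).
  move=> F_cont z; apply: (continuous_comp (g := fun M : 'rV[R]_k => M ord0 i)).
    exact: F_cont.
  exact: coord_continuous.
by apply: continuous_sum => i z; apply: continuousM; apply: coord_cont.
Qed.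

Lemma exists_nearest_point T y : compact T -> T !=set0 ->
  exists2 c, T c & forall t, T t -> dotp (y - c) (y - c) <= dotp (y - t) (y - t).
Proof.
move=> T_compact T_ne0.
have y_sub_cont : continuous (fun t => y - t).
  move=> t; apply: (@continuousB _ _ _ (fun=> y) id); first exact: cst_continuous.
  exact: cvg_id.
have [c Tc c_min] := EVT_min_rV T_ne0 T_compact
  (continuous_subspaceT (continuous_dotp y_sub_cont y_sub_cont)).
by exists c; [rewrite inE in Tc | move=> t Tt; apply: c_min; rewrite inE].
Qed.

Lemma nearest_point_obtuse T y c : convex_set_rV T -> T c ->
  (forall t, T t -> dotp (y - c) (y - c) <= dotp (y - t) (y - t)) ->
  forall t, T t -> dotp (y - c) (t - c) <= 0.
Proof.
move=> T_convex Tc c_min t Tt.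
set a := dotp (y - c) (t - c); set b := dotp (t - c) (t - c).
have b_ge0 : 0 <= b by apply: dotpp_ge0.
have step_le e : 0 < e -> e <= 1 -> 2 * a <= e * b.
  move=> e_gt0 e_le1; have := c_min _ (T_convex _ _ _ Tt Tc (ltW e_gt0) e_le1).
  have -> : y - (e *: t + (1 - e) *: c) = (y - c) - e *: (t - c).
    by apply/rowP => i; rewrite !mxE; ring.
  by rewrite dotp_subZ -/a -/b => ?; rewrite -(ler_pM2l e_gt0); nra.
rewrite leNgt; apply/negP => a_gt0.
have ab_gt0 : 0 < a + b by rewrite ltr_wpDr.
have := step_le _ (divr_gt0 a_gt0 ab_gt0).
rewrite ler_pdivrMr // mul1r lerDl mulrAC ler_pdivlMr // => /(_ b_ge0).
by nra.
Qed.

Lemma separate_point_compact_convex T y : compact T -> convex_set_rV T -> T !=set0 ->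
  ~ T y -> exists w, forall t, T t -> dotp w t < dotp w y.
Proof.
move=> T_compact T_convex T_ne0 Ty.
have [c Tc c_min] := exists_nearest_point y T_compact T_ne0.
exists (y - c) => t Tt.
have := nearest_point_obtuse T_convex Tc c_min Tt.
have : 0 < dotp (y - c) (y - c).
  by apply: dotpp_gt0; rewrite subr_eq0; apply: contra_not_neq Ty => ->.
by rewrite !dotpB; lra.
Qed.

End Separation.

Section RationalPoints.
Variable R : realType.

Lemma rat_nat_frac (r : R) : is_rat r -> 0 <= r ->
  exists e d : nat, (0 < d)%N /\ r = e%:R / d%:R.
Proof.
move=> [q ->]; rewrite ler0q => q_ge0.
exists `|numq q|%N, `|denq q|%N; split; first by rewrite absz_gt0 denq_neq0.
by rewrite !natr_absz ger0_norm ?ler0z ?numq_ge0 // gtr0_norm ?ltr0z ?denq_gt0.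
Qed.

Lemma rat_common_denominator n (x : 'I_n -> R) :
  (forall j, is_rat (x j)) -> (forall j, 0 <= x j) ->
  exists2 m : nat, (0 < m)%N & exists K : 'I_n -> nat, forall j, (K j)%:R = m%:R * x j.
Proof.
move=> x_rat x_ge0.
have /choice [ed ed_E] j : exists ed : nat * nat, (0 < ed.2)%N /\ x j = ed.1%:R / ed.2%:R.
  by have [e [d [d_gt0 ->]]] := rat_nat_frac (x_rat j) (x_ge0 j); exists (e, d).
exists (\prod_j (ed j).2)%N; first by rewrite prodn_gt0 // => j; case: (ed_E j).
exists (fun j => (ed j).1 * \prod_(i | i != j) (ed i).2)%N => j.
case: (ed_E j) => d_gt0 ->; rewrite [in RHS](bigD1 j) //= !natrM.
by field; rewrite pnatr_eq0 -lt0n.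
Qed.

End RationalPoints.

Section SPrimeMinimal.
Variables (R : realType) (n l : nat) (S : set 'rV[R]_n) (f : n.-tuple (cpoly R l)).
Hypothesis f_neq0 : forall j, tnth f j != 0.

Lemma pullback_monomial_mweight w (K : 'X_{1..n}) (s : 'I_n -> 'rV[R]_l) :
  (forall j, conv_hull (supp_pts (tnth f j)) (s j)) ->
  exists2 g, g \in msupp (pullback f 'X_[K]) &
    \sum_j (K j)%:R * dotp w (s j) <= mweight w g.
Proof.
move=> s_hull; have /choice [U U_max] j := msupp_max_exists w (f_neq0 j).
have [g g_in [g_top _]] := msupp_max_prod (P := xpredT) (index_enum 'I_n)
  (fun j _ => msupp_maxX (K j) (U_max j)).
exists g; first by rewrite /pullback comp_mpolyX.
rewrite g_top; apply: ler_sum => j _; rewrite ler_wpM2l ?ler0n //.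
by apply: conv_hull_dotp_le (s_hull j) => _ [a a_in <-]; apply: msupp_max_le (U_max j) a a_in.
Qed.

Lemma S_prime_rat_sub T : admissible S f T -> S `<=` @orthant R n ->
  forall x, S x -> rat_points x -> forall s : 'I_n -> 'rV[R]_l,
  (forall j, conv_hull (supp_pts (tnth f j)) (s j)) -> T (\sum_j x ord0 j *: s j).
Proof.
move=> [T_compact T_convex _ T0 T_pull] S_orth x Sx x_rat s s_hull.
apply: contrapT => Ty.
have [w w_sep] := separate_point_compact_convex T_compact T_convex (ex_intro _ 0 T0) Ty.
have [m m_gt0 [K K_E]] := rat_common_denominator x_rat (S_orth _ Sx).
pose XK : cpoly R n := 'X_[[multinom K j | j < n]].
have XK_PT : PT S m XK.
  move=> a; rewrite msuppX inE => /eqP ->; exists x => //.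
  by apply/rowP => j; rewrite !mxE mnmE K_E.
have [g g_in g_ge] := pullback_monomial_mweight w [multinom K j | j < n] s_hull.
have [t Tt g_E] := T_pull m XK XK_PT g g_in.
have g_weight : mweight w g = m%:R * dotp w t by rewrite /mweight g_E dotpZ.
have : m%:R * dotp w (\sum_j x ord0 j *: s j) <= m%:R * dotp w t.
  rewrite -g_weight dotp_sum mulr_sumr; apply: le_trans g_ge; apply: ler_sum => j _.
  by rewrite dotpZ mnmE K_E mulrA.
by rewrite ler_pM2l ?ltr0n // leNgt w_sep.
Qed.

Lemma S_prime_sub_admissible T : admissible S f T -> S `<=` @orthant R n ->
  closure (S `&` @rat_points R n) = S -> S_prime S f `<=` T.
Proof.
move=> T_adm S_orth S_cl _ [x Sx [s [s_hull ->]]].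
have [T_compact _ _ _ _] := T_adm.
have T_closed : closed T by apply: compact_closed T_compact; exact: norm_hausdorff.
rewrite ((closure_id T).1 T_closed).
have comb_cont : continuous (fun x' : 'rV[R]_n => \sum_j x' ord0 j *: s j).
  apply: (continuous_sum (F := fun j (x' : 'rV[R]_n) => x' ord0 j *: s j)) => j x'.
  by apply: continuousZ; [exact: coord_continuous | exact: cst_continuous].
move=> B /comb_cont B_nbhs; rewrite -S_cl in Sx.
have [x' [[Sx' x'_rat] Bx']] := Sx _ B_nbhs.
by exists (\sum_j x' ord0 j *: s j); split=> //; apply: S_prime_rat_sub.
Qed.

End SPrimeMinimal.

Unset Implicit Arguments.
Set Strict Implicit.

Theorem proposition8p1 (R : realType) (n l : nat) (S : set 'rV[R]_n)
    (f : n.-tuple (cpoly R l)) :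
  S `<=` @orthant R n -> compact S -> convex_set_rV S -> S 0 ->
  closure (S `&` @rat_points R n) = S ->
  (forall j : 'I_n, tnth f j != 0) ->
  admissible S f (S_prime S f) /\
  (forall T : set 'rV[R]_l, admissible S f T -> S_prime S f `<=` T).
Proof.
move=> S_orth S_compact S_convex S0 S_cl f_neq0; split; last first.
  by move=> T T_adm; apply: S_prime_sub_admissible.
split.
- exact: S_prime_compact.
- exact: S_prime_convex.
- exact: S_prime_orthant.
- exact: S_prime0.
- by move=> m p; apply: S_prime_pullback.
Qed.
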